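(* Let $G_L=\langle(12),(23),(34),(67),A\rangle$ and $M_L=\langle(12),(23),(34),(56),(67),A\rangle$ in $GL(7,\mathbb{C})$, as in the context, so that $G_L$ has $12$ right cosets in $M_L$. Let $w_0$ be the unique non-identity element of the center of $M_L$. Consider the action of $M_L$ on the $220$ three-element subsets of the right coset space $G_L\backslash M_L$ given by $\{i,j,k\}\cdot\mu=\{i\mu,j\mu,k\mu\}$, where $(G_L\nu)\mu=G_L(\nu\mu)$. Call a subset $S\subseteq G_L\backslash M_L$ $L$-coherent if no two elements of $S$ are interchanged by the action of $w_0$, and $L$-incoherent otherwise. Then this action has exactly two orbits: one of length $160$, consisting of all $L$-coherent triples, and one of length $60$, consisting of all $L$-incoherent triples.
   Context: A permutation $\sigma\in S_7$ is identified with the $7\times7$ permutation matrix sending $e_i$ to $e_{\sigma(i)}$. The matrix $A$ is \[ A=\begin{pmatrix} 1&0&0&0&0&0&0\\ 0&1&0&0&0&0&0\\ 0&0&-1&0&0&0&1\\ 0&0&0&-1&0&0&1\\ 0&0&-1&-1&1&0&1\\ 0&0&-1&-1&0&1&1\\ 0&0&0&0&0&0&1 \end{pmatrix}. \] $M_L$ is isomorphic to the Coxeter group $W(D_6)$ (order 23040), whose center has order two, and $G_L\cong W(D_5)$ has order 1920. *)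

From HB Require Import structures.
From mathcomp Require Import all_boot all_order all_algebra all_fingroup.
Set Implicit Arguments. Unset Strict Implicit. Unset Printing Implicit Defensive.
Import GRing.Theory Num.Theory.
Local Open Scope ring_scope.

(* 7x7 integer matrices (the groups live in GL(7,Z) inside GL(7,C)). *)
Definition mat := 'M[int]_7.

(* permutation matrix of the transposition (i j), indices 1..7 as in the paper *)
Definition tr (i j : nat) : mat :=
  perm_mx (tperm (inord i.-1 : 'I_7) (inord j.-1)).

Definition A_rows : seq (seq int) :=
  [:: [:: 1; 0; 0; 0; 0; 0; 0];
      [:: 0; 1; 0; 0; 0; 0; 0];
      [:: 0; 0; -1; 0; 0; 0; 1];
      [:: 0; 0; 0; -1; 0; 0; 1];
      [:: 0; 0; -1; -1; 1; 0; 1];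
      [:: 0; 0; -1; -1; 0; 1; 1];
      [:: 0; 0; 0; 0; 0; 0; 1]].

Definition A : mat := \matrix_(i < 7, j < 7) nth 0 (nth [::] A_rows i) j.

Inductive gen (S : seq mat) : mat -> Prop :=
| gen1 : gen S 1%:M
| genL s x : s \in S -> gen S x -> gen S (s *m x)
| genLV s x : s \in S -> gen S x -> gen S (invmx s *m x).

Definition GL_gens : seq mat := [:: tr 1 2; tr 2 3; tr 3 4; tr 6 7; A].
Definition ML_gens : seq mat := [:: tr 1 2; tr 2 3; tr 3 4; tr 5 6; tr 6 7; A].

Definition G_L : mat -> Prop := gen GL_gens.
Definition M_L : mat -> Prop := gen ML_gens.

Definition coset := mat -> Prop.

Definition rcoset (H : mat -> Prop) (nu : mat) : coset :=
  fun x => exists h, H h /\ x = h *m nu.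

Definition is_coset (C : coset) : Prop := exists nu, M_L nu /\ C = rcoset G_L nu.

Definition cact (C : coset) (mu : mat) : coset :=
  fun x => exists y, C y /\ x = y *m mu.

Definition tact (S : coset -> Prop) (mu : mat) : coset -> Prop :=
  fun D => exists C, S C /\ D = cact C mu.

Definition is_triple (S : coset -> Prop) : Prop :=
  exists a b c, [/\ is_coset a, is_coset b, is_coset c &
    [/\ a <> b, a <> c, b <> c & S = (fun C => C = a \/ C = b \/ C = c)]].

Definition central_nonid (w : mat) : Prop :=
  [/\ M_L w, w <> 1%:M & forall m, M_L m -> w *m m = m *m w].

Definition coherent (w0 : mat) (S : coset -> Prop) : Prop :=
  forall a b, S a -> S b -> a <> b -> ~ (cact a w0 = b /\ cact b w0 = a).

Definition triple_orbit (S : coset -> Prop) : (coset -> Prop) -> Prop :=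
  fun S' => exists mu, M_L mu /\ S' = tact S mu.

Definition has_card (X : Type) (P : X -> Prop) (n : nat) : Prop :=
  exists f : 'I_n -> X, injective f /\ (forall x, P x <-> exists i, x = f i).

From Pilot Require Import Defs.
From mathcomp Require Import all_boot all_order all_algebra all_fingroup.
From Stdlib Require Import FunctionalExtensionality PropExtensionality.
From mathcomp Require Import zify.
Set Implicit Arguments. Unset Strict Implicit. Unset Printing Implicit Defensive.
Import GRing.Theory Num.Theory.
Local Open Scope ring_scope.

(* The vector v = (0,0,0,0,1,-1,-1) is fixed by the generators of G_L and its orbit under
   M_L consists of twelve vectors [pt 0], ..., [pt 11].  Coset representatives [rep p] with
   v [rep p] = [pt p], together with Schreier words writing [rep p] g [rep (p g)]^-1 in the
   generators of G_L, show that G_L nu |-> v nu is an M_L-equivariant bijection from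
   G_L\M_L onto this orbit.  A central element of M_L permutes the orbit by a permutation
   commuting with the action; the only candidates are the identity and p |-> 11 - p, and
   the identity is excluded because the first seven points span Q^7.  So w0 pairs the
   cosets as p <-> 11 - p, centrality makes coherence M_L-invariant, and a breadth-first
   search over increasing triples exhibits one orbit of 160 coherent and one of 60
   incoherent triples. *)

(* Matrices are locked, so concrete products are computed on lists of rows and
   transported back along [mx_of_mul]. *)
Section SeqMatrix.
Variable R : pzSemiRingType.

Definition mx_of (m n : nat) (L : seq (seq R)) : 'M[R]_(m, n) :=
  \matrix_(i < m, j < n) nth 0 (nth [::] L i) j.

Definition seq_dot (k : nat) (L1 L2 : seq (seq R)) (i j : nat) : R :=
  foldr (fun l acc => nth 0 (nth [::] L1 i) l * nth 0 (nth [::] L2 l) j + acc) 0 (iota 0 k).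

Definition seq_mulmx (m k n : nat) (L1 L2 : seq (seq R)) : seq (seq R) :=
  [seq [seq seq_dot k L1 L2 i j | j <- iota 0 n] | i <- iota 0 m].

Lemma mx_of_mul m k n L1 L2 :
  mx_of m k L1 *m mx_of k n L2 = mx_of m n (seq_mulmx m k n L1 L2).
Proof.
apply/matrixP=> i j; rewrite !mxE (nth_map 0%N) ?size_iota // nth_iota //.
rewrite (nth_map 0%N) ?size_iota // nth_iota //.
under eq_bigr do rewrite !mxE.
rewrite -(big_mkord xpredT (fun l => nth 0 (nth [::] L1 i) l * nth 0 (nth [::] L2 l) j)).
rewrite /index_iota subn0 /seq_dot.
by elim: (iota 0 k) => [|l s IH]; rewrite ?big_nil // big_cons IH.
Qed.

Definition seq_idmx (n : nat) : seq (seq R) :=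
  [seq [seq (i == j)%:R | j <- iota 0 n] | i <- iota 0 n].

Lemma mx_of_idmx n : mx_of n n (seq_idmx n) = 1%:M.
Proof.
apply/matrixP=> i j; rewrite !mxE (nth_map 0%N) ?size_iota // nth_iota //.
by rewrite (nth_map 0%N) ?size_iota // nth_iota.
Qed.

End SeqMatrix.

Section WordAction.
Variables (X : eqType) (f : nat -> X -> X).

Definition act_word (w : seq nat) (x : X) : X := foldl (fun y i => f i y) x w.

Definition reachable (k : nat) (x y : X) : Prop :=
  exists2 w, all (fun i => i < k)%N w & y = act_word w x.

Lemma reachable_step k x y i : (i < k)%N -> reachable k x y -> reachable k x (f i y).
Proof.
move=> ik [w wk ->]; exists (rcons w i); last by rewrite /act_word foldl_rcons.
by rewrite all_rcons ik.
Qed.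

Fixpoint orbit_from (k n : nat) (seen frontier : seq X) : seq X :=
  if n is n'.+1 then
    let next := undup [seq y <- [seq f i x | i <- iota 0 k, x <- frontier] | y \notin seen] in
    orbit_from k n' (seen ++ next) next
  else seen.

Definition orbit_bfs (k n : nat) (x : X) : seq X := orbit_from k n [:: x] [:: x].

Lemma orbit_fromP k n x seen front :
  {in seen, forall y, reachable k x y} -> {in front, forall y, reachable k x y} ->
  {in orbit_from k n seen front, forall y, reachable k x y}.
Proof.
elim: n seen front => [|n IH] seen front reach_seen reach_front //=.
set next := undup _; have reach_next : {in next, forall y, reachable k x y}.
  move=> y; rewrite mem_undup mem_filter => /andP[_ /allpairsP[[i z] /= [ik zf ->]]].
  by apply: reachable_step (reach_front z zf); rewrite mem_iota in ik.
by apply: IH => // y; rewrite mem_cat => /orP[/reach_seen|/reach_next].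
Qed.

Lemma orbit_bfsP k n x y : y \in orbit_bfs k n x -> reachable k x y.
Proof.
have reach_x : {in [:: x], forall y, reachable k x y}.
  by move=> _ /[1!inE] /eqP ->; exists [::].
exact: orbit_fromP.
Qed.

End WordAction.

Section Generated.
Variable S : seq mat.

Lemma gen_mul (a b : mat) : gen S a -> gen S b -> gen S (a *m b).
Proof.
elim=> [|s x Ss _ IH|s x Ss _ IH] Sb; first by rewrite mul1mx.
- by rewrite -mulmxA; apply: genL (IH Sb).
- by rewrite -mulmxA; apply: genLV (IH Sb).
Qed.

Definition mx_word (w : seq nat) : mat := foldr (fun i acc => nth 1%:M S i *m acc) 1%:M w.

Lemma gen_word w : all (fun i => i < size S)%N w -> gen S (mx_word w).
Proof.
elim: w => [|i w IH] /=; first by move=> _; apply: gen1.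
by case/andP=> iS wS; apply: genL (IH wS); apply: mem_nth.
Qed.

Hypothesis S_invol : forall s, s \in S -> s *m s = 1%:M.

Lemma gen_ind (P : mat -> Prop) : P 1%:M ->
  (forall s x : mat, s \in S -> gen S x -> P x -> P (s *m x)) -> forall x, gen S x -> P x.
Proof.
move=> P1 PS x; elim=> [|s {}x Ss Sx Px|s {}x Ss Sx Px] //; first exact: PS.
have s_unit : s \in unitmx by apply: (mulmx1_unit (S_invol Ss)).1.
have -> : invmx s = s by rewrite -[invmx s]mulmx1 -(S_invol Ss) mulmxA mulVmx ?mul1mx.
exact: PS.
Qed.

Lemma gen_inv (x : mat) : gen S x -> exists2 y, gen S y & y *m x = 1%:M.
Proof.
move: x; apply: gen_ind => [|s x Ss _ [y Sy yx]].
  by exists 1%:M; rewrite ?mul1mx //; apply: gen1.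
exists (y *m s); first by apply: gen_mul Sy _; rewrite -[s]mulmx1; apply: genL (gen1 _).
by rewrite -mulmxA (mulmxA s) S_invol // mul1mx.
Qed.

End Generated.

Definition seq_word (SL : seq (seq (seq int))) (w : seq nat) : seq (seq int) :=
  foldr (fun i acc => seq_mulmx 7 7 7 (nth (seq_idmx int 7) SL i) acc) (seq_idmx int 7) w.

Lemma mx_word_seq SL w : mx_word (map (mx_of 7 7) SL) w = mx_of 7 7 (seq_word SL w).
Proof.
elim: w => [|i w IH] /=; first by rewrite mx_of_idmx.
have -> : nth 1%:M (map (mx_of 7 7) SL) i = mx_of 7 7 (nth (seq_idmx int 7) SL i).
  by elim: SL i {IH} => [|L SL IHL] [|i] //=; rewrite mx_of_idmx.
by rewrite IH mx_of_mul.
Qed.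

Definition seq_tr (a b : nat) : seq (seq int) :=
  [seq [seq ((if i == a.-1 then b.-1 else if i == b.-1 then a.-1 else i) == j)%:R
     | j <- iota 0 7] | i <- iota 0 7].

Lemma tr_seq a b : (0 < a <= 7)%N -> (0 < b <= 7)%N -> tr a b = mx_of 7 7 (seq_tr a b).
Proof.
move=> /andP[a0 a7] /andP[b0 b7]; have a7' : (a.-1 < 7)%N by rewrite prednK.
have b7' : (b.-1 < 7)%N by rewrite prednK.
apply/matrixP=> i j; rewrite /tr /perm_mx !mxE (nth_map 0%N) ?size_iota // nth_iota //.
rewrite (nth_map 0%N) ?size_iota // nth_iota // !add0n.
case: tpermP => [->|->|ia ib].
- by rewrite inordK // eqxx -val_eqE /= inordK.
- rewrite inordK // -val_eqE /= inordK //.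
  by case: (eqVneq b.-1 a.-1) => [->|ba]; rewrite ?eqxx // (negPf ba) eqxx.
- have /negPf-> : (i != a.-1 :> nat).
    by apply/eqP=> e; apply: ia; apply: val_inj; rewrite /= inordK.
  have /negPf-> // : (i != b.-1 :> nat).
  by apply/eqP=> e; apply: ib; apply: val_inj; rewrite /= inordK.
Qed.

Definition ML_seqs := [:: seq_tr 1 2; seq_tr 2 3; seq_tr 3 4; seq_tr 5 6; seq_tr 6 7; A_rows].
Definition GL_seqs := [:: seq_tr 1 2; seq_tr 2 3; seq_tr 3 4; seq_tr 6 7; A_rows].

Lemma ML_gensE : ML_gens = map (mx_of 7 7) ML_seqs.
Proof. by rewrite /ML_gens /= !tr_seq. Qed.

Lemma GL_gensE : GL_gens = map (mx_of 7 7) GL_seqs.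
Proof. by rewrite /GL_gens /= !tr_seq. Qed.

Lemma GL_gens_sub : {subset GL_gens <= ML_gens}.
Proof. by move=> s; rewrite !inE => /or4P[| | |/orP[]] ->; rewrite ?orbT. Qed.

Lemma ML_seqs_invol : all (fun L => seq_mulmx 7 7 7 L L == seq_idmx int 7) ML_seqs.
Proof. by vm_compute. Qed.

Lemma ML_gens_invol (s : mat) : s \in ML_gens -> s *m s = 1%:M.
Proof.
rewrite ML_gensE => /mapP[L ML ->].
by rewrite mx_of_mul (eqP (allP ML_seqs_invol L ML)) mx_of_idmx.
Qed.

Lemma GL_gens_invol (s : mat) : s \in GL_gens -> s *m s = 1%:M.
Proof. by move/GL_gens_sub; apply: ML_gens_invol. Qed.

Lemma M_L_word w : all (fun i => i < 6)%N w -> M_L (mx_word ML_gens w).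
Proof. by move=> w6; apply: gen_word; exact: w6. Qed.

Definition pt_rows : seq (seq int) :=
  [:: [:: 0; 0; 0; 0; 1; -1; -1];
      [:: 0; 0; 0; 0; -1; 1; -1];
      [:: 0; 0; 0; 0; -1; -1; 1];
      [:: 0; 0; 2; 2; -1; -1; -1];
      [:: 0; 2; 0; 2; -1; -1; -1];
      [:: 2; 0; 0; 2; -1; -1; -1];
      [:: 0; 2; 2; 0; -1; -1; -1];
      [:: 2; 0; 2; 0; -1; -1; -1];
      [:: 2; 2; 0; 0; -1; -1; -1];
      [:: 2; 2; 2; 2; -1; -1; -3];
      [:: 2; 2; 2; 2; -1; -3; -1];
      [:: 2; 2; 2; 2; -3; -1; -1]].

Definition pt_seq (p : nat) : seq (seq int) := [:: nth [::] pt_rows p].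

Definition pt (p : nat) : 'rV[int]_7 := mx_of 1 7 (pt_seq p).

Definition pt_act (i p : nat) : nat :=
  index (head [::] (seq_mulmx 1 7 7 (pt_seq p) (nth (seq_idmx int 7) ML_seqs i))) pt_rows.

Definition pt_word : seq nat -> nat -> nat := act_word pt_act.

Lemma pt_rows_shape : uniq pt_rows && all (fun r => size r == 7)%N pt_rows.
Proof. by vm_compute. Qed.

Lemma pt_act_spec : all (fun i => all (fun p =>
    (pt_act i p < 12)%N &&
    (seq_mulmx 1 7 7 (pt_seq p) (nth (seq_idmx int 7) ML_seqs i) == pt_seq (pt_act i p)))
  (iota 0 12)) (iota 0 6).
Proof. by vm_compute. Qed.

Lemma all_iotaP (P : pred nat) n : reflect (forall i, (i < n)%N -> P i) (all P (iota 0 n)).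
Proof.
apply: (iffP allP) => PS i => [lt_in|]; first by apply: PS; rewrite mem_iota.
by rewrite mem_iota => /andP[_]; apply: PS.
Qed.

Lemma pt_inj p q : (p < 12)%N -> (q < 12)%N -> pt p = pt q -> p = q.
Proof.
move=> p12 q12 /matrixP e; case/andP: pt_rows_shape => uniq_rows /allP size_rows.
have size_nth r : (r < 12)%N -> size (nth [::] pt_rows r) = 7.
  by move=> r12; apply/eqP/size_rows/mem_nth.
apply/eqP; rewrite -(nth_uniq [::] (p12 : p < size pt_rows)%N (q12 : q < size pt_rows)%N uniq_rows).
apply/eqP.
apply: (eq_from_nth (x0 := 0)) => [|j]; rewrite !size_nth // => j7.
by have := e 0 (Ordinal j7); rewrite !mxE.
Qed.

Lemma pt_act_lt i p : (i < 6)%N -> (p < 12)%N -> (pt_act i p < 12)%N.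
Proof. by move=> i6 p12; have /all_iotaP/(_ i i6)/all_iotaP/(_ p p12)/andP[] := pt_act_spec. Qed.

Lemma pt_mul_gen i p : (i < 6)%N -> (p < 12)%N -> pt p *m nth 1%:M ML_gens i = pt (pt_act i p).
Proof.
move=> i6 p12; have /all_iotaP/(_ i i6)/all_iotaP/(_ p p12)/andP[_ /eqP e] := pt_act_spec.
by rewrite ML_gensE (nth_map (seq_idmx int 7)) // /pt mx_of_mul e.
Qed.

Lemma pt_word_lt w p : all (fun i => i < 6)%N w -> (p < 12)%N -> (pt_word w p < 12)%N.
Proof.
elim: w p => [|i w IH] p //= /andP[i6 w6] p12.
by apply: IH w6 (pt_act_lt i6 p12).
Qed.

Lemma pt_mul_word w p : all (fun i => i < 6)%N w -> (p < 12)%N ->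
  pt p *m mx_word ML_gens w = pt (pt_word w p).
Proof.
elim: w p => [|i w IH] p /=; first by rewrite mulmx1.
by case/andP=> i6 w6 p12; rewrite mulmxA pt_mul_gen // IH // pt_act_lt.
Qed.

Lemma GL_seqs_fix_pt0 :
  all (fun G => seq_mulmx 1 7 7 (pt_seq 0) G == pt_seq 0) GL_seqs.
Proof. by vm_compute. Qed.

Lemma G_L_fix_pt0 h : G_L h -> pt 0 *m h = pt 0.
Proof.
move: h; apply: (gen_ind GL_gens_invol) => [|s x + _ IH]; first by rewrite mulmx1.
rewrite GL_gensE => /mapP[G GL ->].
by rewrite mulmxA /pt mx_of_mul (eqP (allP GL_seqs_fix_pt0 G GL)).
Qed.

Definition coset_words : seq (seq nat) :=
  [:: [::]; [:: 3]; [:: 3; 4]; [:: 3; 4; 5]; [:: 3; 4; 5; 1]; [:: 3; 4; 5; 1; 0];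
      [:: 3; 4; 5; 1; 2]; [:: 3; 4; 5; 1; 0; 2]; [:: 3; 4; 5; 1; 0; 2; 1];
      [:: 3; 4; 5; 1; 0; 2; 1; 5]; [:: 3; 4; 5; 1; 0; 2; 1; 5; 4];
      [:: 3; 4; 5; 1; 0; 2; 1; 5; 4; 3]]%N.

Definition rep (p : nat) : mat := mx_word ML_gens (nth [::] coset_words p).

Lemma coset_words_spec : all (fun p =>
    all (fun i => i < 6)%N (nth [::] coset_words p) && (pt_word (nth [::] coset_words p) 0 == p))
  (iota 0 12).
Proof. by vm_compute. Qed.

Lemma coset_word_lt p : (p < 12)%N -> all (fun i => i < 6)%N (nth [::] coset_words p).
Proof. by move=> p12; have /all_iotaP/(_ p p12)/andP[] := coset_words_spec. Qed.

Lemma rep_M_L p : (p < 12)%N -> M_L (rep p).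
Proof. by move=> p12; apply: gen_word; apply: coset_word_lt. Qed.

Lemma pt0_rep p : (p < 12)%N -> pt 0 *m rep p = pt p.
Proof.
move=> p12; have /all_iotaP/(_ p p12)/andP[w6 /eqP e] := coset_words_spec.
by rewrite pt_mul_word // e.
Qed.

(* Entry [i][p] is a word in the generators of G_L equal to rep p * g_i * (rep (pt_act i p))^-1. *)
Definition schreier_words : seq (seq (seq nat)) :=
  [:: [:: [:: 0]; [:: 0]; [:: 0]; [:: 0]; [:: ]; [:: ]; [:: ]; [:: ];
          [:: 2]; [:: 2]; [:: 2]; [:: 2]];
      [:: [:: 1]; [:: 1]; [:: 1]; [:: ]; [:: ]; [:: 0]; [:: 2]; [:: ]; [:: ];
          [:: 0; 1; 2; 1; 0]; [:: 0; 1; 2; 1; 0]; [:: 0; 1; 2; 1; 0]];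
      [:: [:: 2]; [:: 2]; [:: 2]; [:: 2]; [:: ]; [:: ]; [:: ]; [:: ];
          [:: 0]; [:: 0]; [:: 0]; [:: 0]];
      [:: [:: ]; [:: ]; [:: 3]; [:: 3]; [:: 3]; [:: 3]; [:: 3]; [:: 3]; [:: 3]; [:: 3];
          [:: ]; [:: ]];
      [:: [:: 3]; [:: ]; [:: ]; [:: 4; 2]; [:: 4; 2]; [:: 4; 2]; [:: 4; 2]; [:: 4; 2]; [:: 4; 2];
          [:: ]; [:: ]; [:: 3]];
      [:: [:: 4]; [:: 4]; [:: ]; [:: ]; [:: 1; 2; 1]; [:: 1; 2; 1]; [:: 1; 2; 1]; [:: 1; 2; 1];
          [:: ]; [:: ]; [:: 4; 2; 0]; [:: 4; 2; 0]]]%N.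

Definition schreier_word (i p : nat) : seq nat := nth [::] (nth [::] schreier_words i) p.

Lemma schreier_words_spec : all (fun i => all (fun p =>
    all (fun k => k < 5)%N (schreier_word i p) &&
    (seq_mulmx 7 7 7 (seq_word ML_seqs (nth [::] coset_words p)) (nth (seq_idmx int 7) ML_seqs i) ==
     seq_mulmx 7 7 7 (seq_word GL_seqs (schreier_word i p))
                   (seq_word ML_seqs (nth [::] coset_words (pt_act i p)))))
  (iota 0 12)) (iota 0 6).
Proof. by vm_compute. Qed.

Lemma rep_mul_gen i p : (i < 6)%N -> (p < 12)%N ->
  exists2 h, G_L h & rep p *m nth 1%:M ML_gens i = h *m rep (pt_act i p).
Proof.
move=> i6 p12; have /all_iotaP/(_ i i6)/all_iotaP/(_ p p12)/andP[w5 /eqP e] := schreier_words_spec.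
exists (mx_word GL_gens (schreier_word i p)); first exact: gen_word.
rewrite /rep GL_gensE ML_gensE !mx_word_seq (nth_map (seq_idmx int 7)) //.
by rewrite !mx_of_mul e.
Qed.

Lemma rep_mul nu p : M_L nu -> (p < 12)%N -> exists q, [/\ (q < 12)%N, pt p *m nu = pt q &
  exists2 h, G_L h & rep p *m nu = h *m rep q].
Proof.
move=> ML_nu; elim/(gen_ind ML_gens_invol): nu / ML_nu p => [|s x + _ IH] p p12.
  by exists p; split; rewrite ?mulmx1 //; exists 1%:M; rewrite ?mul1mx //; apply: gen1.
case/(nthP 1%:M)=> i i6 <-.
have [q [q12 e1 [h2 GL_h2 e2]]] := IH _ (pt_act_lt i6 p12).
have [h1 GL_h1 e3] := rep_mul_gen i6 p12.
exists q; split => //; first by rewrite mulmxA pt_mul_gen.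
by exists (h1 *m h2); [apply: gen_mul | rewrite mulmxA e3 -mulmxA e2 mulmxA].
Qed.

Lemma predext (T : Type) (P Q : T -> Prop) : (forall x, P x <-> Q x) -> P = Q.
Proof.
by move=> PQ; apply: functional_extensionality => x; apply: propositional_extensionality.
Qed.

Definition coset_pt (p : nat) : Defs.coset := Defs.rcoset G_L (rep p).

Lemma rcoset_G_L_mul h nu : G_L h -> Defs.rcoset G_L (h *m nu) = Defs.rcoset G_L nu.
Proof.
move=> GL_h; apply: predext => x; split; case=> h' [GL_h' ->].
- by exists (h' *m h); split; [apply: gen_mul | rewrite mulmxA].
- have [h'' GL_h'' e] := gen_inv GL_gens_invol GL_h.
  exists (h' *m h''); split; first exact: gen_mul.
  by rewrite -mulmxA (mulmxA h'') e mul1mx.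
Qed.

Lemma cact_rcoset nu mu : cact (Defs.rcoset G_L nu) mu = Defs.rcoset G_L (nu *m mu).
Proof.
apply: predext => x; split.
- by case=> y [[h [GL_h ->]] ->]; exists h; rewrite mulmxA.
- by case=> h [GL_h ->]; exists (h *m nu); split; [exists h | rewrite mulmxA].
Qed.

Lemma cact_mul C a b : cact C (a *m b) = cact (cact C a) b.
Proof.
apply: predext => x; split.
- by case=> y [Cy ->]; exists (y *m a); split; [exists y | rewrite mulmxA].
- by case=> z [[y [Cy ->]] ->]; exists y; rewrite mulmxA.
Qed.

Lemma cact1 C : cact C 1%:M = C.
Proof.
apply: predext => x; split; first by case=> y [Cy ->]; rewrite mulmx1.
by move=> Cx; exists x; rewrite mulmx1.
Qed.

Lemma cact_inj mu C D : M_L mu -> cact C mu = cact D mu -> C = D.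
Proof.
move=> ML_mu e; have [mu' _ e'] := gen_inv ML_gens_invol ML_mu.
by rewrite -[C]cact1 -[D]cact1 -(mulmx1C e') !cact_mul e.
Qed.

Lemma cact_coset_pt mu p : M_L mu -> (p < 12)%N ->
  exists q, [/\ (q < 12)%N, cact (coset_pt p) mu = coset_pt q & pt p *m mu = pt q].
Proof.
move=> ML_mu p12; have [q [q12 e1 [h GL_h e2]]] := rep_mul ML_mu p12.
by exists q; rewrite /coset_pt cact_rcoset e2 rcoset_G_L_mul.
Qed.

Lemma cact_coset_ptE mu p q : M_L mu -> (p < 12)%N -> (q < 12)%N ->
  pt p *m mu = pt q -> cact (coset_pt p) mu = coset_pt q.
Proof.
move=> ML_mu p12 q12 e; have [q' [q'12 -> e']] := cact_coset_pt ML_mu p12.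
by rewrite (pt_inj q'12 q12) // -e' e.
Qed.

Lemma is_cosetP C : is_coset C <-> exists2 p, (p < 12)%N & C = coset_pt p.
Proof.
split.
- case=> nu [ML_nu ->]; have [q [q12 _ [h GL_h e]]] := rep_mul ML_nu (isT : 0 < 12)%N.
  by exists q; rewrite // -[nu]mul1mx -[1%:M]/(rep 0) e rcoset_G_L_mul.
- by case=> p p12 ->; exists (rep p); split; first exact: rep_M_L.
Qed.

Lemma is_coset_pt p : (p < 12)%N -> is_coset (coset_pt p).
Proof. by move=> p12; apply/is_cosetP; exists p. Qed.

Lemma coset_pt_inj p q : (p < 12)%N -> (q < 12)%N -> coset_pt p = coset_pt q -> p = q.
Proof.
move=> p12 q12 e; have : coset_pt q (rep p).
  by rewrite -e; exists 1%:M; rewrite mul1mx; split; first exact: gen1.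
case=> h [GL_h rep_p]; apply: pt_inj => //.
by rewrite -(pt0_rep p12) -(pt0_rep q12) rep_p mulmxA G_L_fix_pt0.
Qed.

Lemma mulmx_linv_fix (R : idomainType) n (B C w : 'M[R]_n) (d : R) :
  d != 0 -> C *m B = d%:M -> B *m w = B -> w = 1%:M.
Proof.
move=> d0 CB Bw; apply/eqP; rewrite -subr_eq0.
have : d *: (w - 1%:M) == 0.
  by rewrite scalerBr scalemx1 -mul_scalar_mx -CB -mulmxA Bw CB subrr.
by rewrite scalemx_eq0 (negPf d0).
Qed.

Definition left_inverse_pts : seq (seq int) :=
  [:: [:: 1; 1; 1; 1; 1; -2; -1];
      [:: 1; 1; 1; 1; -1; 0; -1];
      [:: 1; 1; 1; -1; 1; 0; -1];
      [:: 1; 1; 1; -1; -1; 0; 1];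
      [:: 0; 2; 2; 0; 0; 0; 0];
      [:: 2; 0; 2; 0; 0; 0; 0];
      [:: 2; 2; 0; 0; 0; 0; 0]].

Lemma left_inverse_ptsE :
  seq_mulmx 7 7 7 left_inverse_pts (take 7 pt_rows) ==
  [seq [seq - 4 *+ (i == j) | j <- iota 0 7] | i <- iota 0 7].
Proof. by vm_compute. Qed.

Lemma pt_faithful w : (forall p, (p < 7)%N -> pt p *m w = pt p) -> w = 1%:M.
Proof.
move=> w_fix; pose B := mx_of 7 7 (take 7 pt_rows).
apply: (@mulmx_linv_fix _ _ B (mx_of 7 7 left_inverse_pts) _ (- 4)) => //.
  rewrite mx_of_mul (eqP left_inverse_ptsE); apply/matrixP=> i j.
  by rewrite !mxE (nth_map 0%N) ?size_iota // nth_iota // (nth_map 0%N) ?size_iota // nth_iota.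
apply/row_matrixP=> k; rewrite row_mul.
have -> : row k B = pt k by apply/rowP=> j; rewrite !mxE nth_take.
exact: w_fix.
Qed.

Lemma M_L_gen i : (i < 6)%N -> M_L (nth 1%:M ML_gens i).
Proof. by move=> i6; rewrite -[nth _ _ _]mulmx1; apply: genL (gen1 _); apply: mem_nth. Qed.

Definition w0_word : seq nat :=
  [:: 5; 4; 1; 5; 4; 1; 5; 3; 4; 0; 1; 5; 4; 1; 5; 3; 4; 0; 1; 5; 4; 3; 1; 0]%N.

Definition w0 : mat := mx_word ML_gens w0_word.

Lemma w0_word_spec : [&& all (fun i => i < 6)%N w0_word,
  nth 0 (nth [::] (seq_word ML_seqs w0_word) 0) 0 != 1 &
  all (fun G => seq_mulmx 7 7 7 (seq_word ML_seqs w0_word) G ==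
                seq_mulmx 7 7 7 G (seq_word ML_seqs w0_word)) ML_seqs].
Proof. by vm_compute. Qed.

Lemma w0_comm_gen s : s \in ML_gens -> w0 *m s = s *m w0.
Proof.
case/and3P: w0_word_spec => _ _ /allP w0_comm.
rewrite ML_gensE => /mapP[G ML_G ->].
by rewrite /w0 ML_gensE mx_word_seq !mx_of_mul (eqP (w0_comm G ML_G)).
Qed.

Lemma central_nonid_w0 : central_nonid w0.
Proof.
case/and3P: w0_word_spec => w6 w0_00 _; split.
- exact: gen_word.
- move/matrixP/(_ 0 0); rewrite /w0 ML_gensE mx_word_seq !mxE => e.
  by move: w0_00; rewrite e eqxx.
- apply: (gen_ind ML_gens_invol) => [|s x ML_s _ IH]; first by rewrite mulmx1 mul1mx.
  by rewrite mulmxA (w0_comm_gen ML_s) -mulmxA IH mulmxA.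
Qed.

(* If a central element sends point 0 to point q, it sends point p to [central_perm q p]. *)
Definition central_perm (q p : nat) : nat := pt_word (nth [::] coset_words p) q.

Definition central_perm_commutes (q : nat) : bool :=
  all (fun i => all (fun p =>
    central_perm q (pt_act i p) == pt_act i (central_perm q p)) (iota 0 12)) (iota 0 6).

Lemma central_perm_spec :
  all (fun q => central_perm_commutes q ==> (q == 0) || (q == 11))%N (iota 0 12) &&
  all (fun p => central_perm 11 p == 11 - p)%N (iota 0 12).
Proof. by vm_compute. Qed.

Section CentralElement.
Variables (w : mat) (q : nat).
Hypotheses (w_central : forall m, M_L m -> w *m m = m *m w)
           (pt0_w : pt 0 *m w = pt q) (q12 : (q < 12)%N).

Lemma central_perm_lt p : (p < 12)%N -> (central_perm q p < 12)%N.
Proof. by move=> p12; apply: pt_word_lt q12; apply: coset_word_lt. Qed.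

Lemma pt_mul_central p : (p < 12)%N -> pt p *m w = pt (central_perm q p).
Proof.
move=> p12; rewrite -(pt0_rep p12) -mulmxA -(w_central (rep_M_L p12)) mulmxA pt0_w.
exact: pt_mul_word (coset_word_lt p12) q12.
Qed.

Lemma central_permP : central_perm_commutes q.
Proof.
apply/all_iotaP=> i i6; apply/all_iotaP=> p p12; apply/eqP.
apply: pt_inj (central_perm_lt (pt_act_lt i6 p12)) (pt_act_lt i6 (central_perm_lt p12)) _.
rewrite -(pt_mul_central (pt_act_lt i6 p12)) -(pt_mul_gen i6 p12) -mulmxA.
rewrite -(w_central (M_L_gen i6)) mulmxA (pt_mul_central p12).
exact: pt_mul_gen i6 (central_perm_lt p12).
Qed.

End CentralElement.

Lemma central_nonid_antipode w p : central_nonid w -> (p < 12)%N ->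
  cact (coset_pt p) w = coset_pt (11 - p).
Proof.
case=> ML_w w_neq1 w_central p12; case/andP: central_perm_spec => /all_iotaP q_cases perm_11.
have [q [q12 _ pt0_w]] := cact_coset_pt ML_w (isT : 0 < 12)%N.
have pt_w := pt_mul_central w_central pt0_w q12.
have /orP[/eqP q0|/eqP q11] := implyP (q_cases q q12) (central_permP w_central pt0_w q12).
  case: w_neq1; apply: pt_faithful => r r7; have r12 : (r < 12)%N by apply: ltn_trans r7 _.
  have /all_iotaP/(_ r r12)/andP[_ /eqP pt_word_r] := coset_words_spec.
  by rewrite (pt_w _ r12) q0 /central_perm pt_word_r.
apply: (cact_coset_ptE ML_w p12); first by rewrite ltnS leq_subr.
by rewrite (pt_w _ p12) q11 (eqP (elimT (all_iotaP _ _) perm_11 p p12)).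
Qed.

Lemma cact_coset_pt_word w p : all (fun i => i < 6)%N w -> (p < 12)%N ->
  cact (coset_pt p) (mx_word ML_gens w) = coset_pt (pt_word w p).
Proof.
move=> w6 p12; apply: (cact_coset_ptE (M_L_word w6) p12 (pt_word_lt w6 p12)).
exact: pt_mul_word.
Qed.

Definition triple_of (l : seq nat) : Defs.coset -> Prop :=
  fun C => exists2 p, p \in l & C = coset_pt p.

Lemma triple_of_eq_mem l1 l2 : l1 =i l2 -> triple_of l1 = triple_of l2.
Proof.
by move=> e; apply: predext => C; split; case=> p pl ->; exists p; rewrite ?e // -e.
Qed.

Lemma triple_of_subset l1 l2 : all (fun p => p < 12)%N l1 -> all (fun p => p < 12)%N l2 ->
  triple_of l1 = triple_of l2 -> {subset l1 <= l2}.
Proof.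
move=> /allP l1_12 /allP l2_12 e p pl1.
have : triple_of l2 (coset_pt p) by rewrite -e; exists p.
by case=> q ql2 /coset_pt_inj -> //; [apply: l1_12 | apply: l2_12].
Qed.

Definition index_triple (l : seq nat) : bool :=
  [&& size l == 3, uniq l & all (fun p => p < 12)%N l].

Lemma is_tripleP S : is_triple S <-> exists2 l, index_triple l & S = triple_of l.
Proof.
have triple3 a b c :
    (fun C => C = coset_pt a \/ C = coset_pt b \/ C = coset_pt c) = triple_of [:: a; b; c].
  apply: predext => C; split; last by case=> p; rewrite !inE => /or3P[]/eqP-> ->; tauto.
  by case=> [->|[->|->]]; [exists a | exists b | exists c]; rewrite // !inE eqxx ?orbT.
split.
- case=> a [b [c [/is_cosetP[p p12 ->] /is_cosetP[q q12 ->] /is_cosetP[r r12 ->]]]].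
  case=> pq pr qr ->; exists [:: p; q; r]; last exact: triple3.
  rewrite /index_triple /= !inE p12 q12 r12 !andbT.
  rewrite negb_or -andbA; apply/and3P; split; apply/eqP=> /(congr1 coset_pt);
    [exact: pq | exact: pr | exact: qr].
- case=> [[|a [|b [|c []]]]] // /and3P[_ uniq_abc lt12] ->.
  case/and4P: lt12 => a12 b12 c12 _; move: uniq_abc; rewrite /= !inE andbT.
  case/andP=> /norP[ab ac] bc.
  exists (coset_pt a), (coset_pt b), (coset_pt c).
  split; [exact: is_coset_pt a12 | exact: is_coset_pt b12 | exact: is_coset_pt c12 |].
  split; last by rewrite triple3.
  + by move/(coset_pt_inj a12 b12)/eqP; apply/negP.
  + by move/(coset_pt_inj a12 c12)/eqP; apply/negP.
  + by move/(coset_pt_inj b12 c12)/eqP; apply/negP.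
Qed.

Lemma tact_word l w : all (fun i => i < 6)%N w -> all (fun p => p < 12)%N l ->
  tact (triple_of l) (mx_word ML_gens w) = triple_of (map (pt_word w) l).
Proof.
move=> w6 /allP l12; apply: predext => D; split.
- case=> C [[p pl ->] ->]; exists (pt_word w p); first exact: map_f.
  exact: cact_coset_pt_word w6 (l12 p pl).
- case=> q /mapP[p pl ->] ->; exists (coset_pt p); split; first by exists p.
  by rewrite cact_coset_pt_word // l12.
Qed.

Lemma tact_mul S a b : tact (tact S a) b = tact S (a *m b).
Proof.
apply: predext => D; split.
- by case=> C [[E [SE ->]] ->]; exists E; rewrite cact_mul.
- by case=> E [SE ->]; exists (cact E a); split; [exists E | rewrite cact_mul].
Qed.

Lemma tact1 S : tact S 1%:M = S.
Proof.
apply: predext => D; split; first by case=> C [SC ->]; rewrite cact1.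
by move=> SD; exists D; rewrite cact1.
Qed.

Lemma tact_inv S mu : M_L mu -> exists2 mu', M_L mu' & tact (tact S mu) mu' = S.
Proof.
move=> ML_mu; have [mu' ML_mu' e] := gen_inv ML_gens_invol ML_mu.
by exists mu'; rewrite // tact_mul (mulmx1C e) tact1.
Qed.

Lemma is_triple_tact S mu : M_L mu -> is_triple S -> is_triple (tact S mu).
Proof.
move=> ML_mu [a [b [c [ca cb cc [ab ac bc ->]]]]].
have coset_cact C : is_coset C -> is_coset (cact C mu).
  by case=> nu [ML_nu ->]; exists (nu *m mu); split; [apply: gen_mul | apply: cact_rcoset].
exists (cact a mu), (cact b mu), (cact c mu); split; try exact: coset_cact.
split; try by move/(cact_inj ML_mu).
apply: predext => D; split.
- by case=> C [[->|[->|->]] ->]; tauto.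
- by case=> [->|[->|->]]; eexists; (split; last reflexivity); tauto.
Qed.

Definition coherentb (l : seq nat) : bool := ~~ has (fun p => (11 - p)%N \in l) l.

Lemma coherentb_eq_mem l1 l2 : l1 =i l2 -> coherentb l1 = coherentb l2.
Proof.
by move=> e; rewrite /coherentb (eq_has_r e); congr (~~ _); apply: eq_has => p; rewrite e.
Qed.

Lemma coherentP w l : central_nonid w -> index_triple l ->
  coherent w (triple_of l) <-> coherentb l.
Proof.
move=> cw /and3P[_ _ /allP l12]; split.
- move=> coh; apply/hasP=> -[p pl anti_pl].
  have p12 := l12 p pl; have anti_p12 : (11 - p < 12)%N by rewrite ltnS leq_subr.
  apply: (coh (coset_pt p) (coset_pt (11 - p))); [by exists p | by exists (11 - p)%N | | ].
  + by move/(coset_pt_inj p12 anti_p12); lia.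
  + by rewrite !central_nonid_antipode // subKn.
- move=> /hasPn cohl _ _ [p pl ->] [q ql ->] _ [e _].
  rewrite central_nonid_antipode ?l12 // in e.
  have anti_pq := coset_pt_inj _ (l12 q ql) e.
  by move: (cohl p pl); rewrite anti_pq ?ql // ltnS leq_subr.
Qed.

Lemma coherent_tact w S mu : central_nonid w -> M_L mu -> coherent w S -> coherent w (tact S mu).
Proof.
move=> [_ _ w_central] ML_mu coh _ _ [a [Sa ->]] [b [Sb ->]] ab.
rewrite -!cact_mul -!w_central // !cact_mul => -[/(cact_inj ML_mu) e1 /(cact_inj ML_mu) e2].
by apply: (coh a b Sa Sb) => // ab'; apply: ab; rewrite ab'.
Qed.

Lemma coherent_tact_iff w S mu : central_nonid w -> M_L mu ->
  coherent w (tact S mu) <-> coherent w S.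
Proof.
move=> cw ML_mu; split; last exact: coherent_tact.
move=> coh; have [mu' ML_mu' <-] := tact_inv S ML_mu.
exact: coherent_tact coh.
Qed.

Definition triple_act (i : nat) (l : seq nat) : seq nat := sort leq (map (pt_act i) l).

Lemma act_word_triple w l : perm_eq (act_word triple_act w l) (map (pt_word w) l).
Proof.
elim: w l => [|i w IH] l /=; first by rewrite map_id.
apply: perm_trans (IH _) _; rewrite -[pt_word (i :: w)]/(pt_word w \o pt_act i) map_comp.
by apply: perm_map; rewrite perm_sort.
Qed.

Definition triple_rep (l : seq nat) : seq nat :=
  if coherentb l then [:: 0; 1; 2]%N else [:: 0; 1; 11]%N.

Definition sorted_triples : seq (seq nat) :=
  (flatten [seq flatten [seq [seq [:: a; b; c] | c <- iota b.+1 (11 - b)]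
                        | b <- iota a.+1 (11 - a)] | a <- iota 0 12])%N.

Lemma sorted_triples_spec :
  [&& uniq sorted_triples, all (fun l => sorted ltn l && index_triple l) sorted_triples &
   all (fun a => all (fun b => all (fun c => uniq [:: a; b; c] ==>
       (sort leq [:: a; b; c] \in sorted_triples)) (iota 0 12)) (iota 0 12)) (iota 0 12)].
Proof. by vm_compute. Qed.

Lemma sort_index_triple l : index_triple l -> sort leq l \in sorted_triples.
Proof.
case/and3P: sorted_triples_spec => _ _ complete.
case: l => [|a [|b [|c []]]] // /and3P[_ uniq_abc /and4P[a12 b12 c12 _]].
move: complete => /all_iotaP/(_ a a12)/all_iotaP/(_ b b12)/all_iotaP/(_ c c12).
by rewrite uniq_abc.
Qed.

Lemma triple_orbits_spec :
  all (mem (orbit_bfs triple_act 6 18 [:: 0; 1; 2])%N) [seq l <- sorted_triples | coherentb l] &&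
  all (mem (orbit_bfs triple_act 6 18 [:: 0; 1; 11])%N) [seq l <- sorted_triples | ~~ coherentb l].
Proof. by vm_compute. Qed.

Lemma triple_reachable l : index_triple l ->
  exists2 w, all (fun i => i < 6)%N w & perm_eq l (map (pt_word w) (triple_rep l)).
Proof.
move=> l_ok; have sort_l := sort_index_triple l_ok.
have rep_sort : triple_rep (sort leq l) = triple_rep l.
  by rewrite /triple_rep (coherentb_eq_mem (mem_sort leq l)).
have : reachable triple_act 6 (triple_rep (sort leq l)) (sort leq l).
  (* Going through a variable [s] keeps the orbit from being unfolded during conversion. *)
  have all_mem_sub (s t : seq (seq nat)) : all (mem s) t -> {subset t <= s} by move/allP.
  case/andP: triple_orbits_spec => /all_mem_sub coh_orbit /all_mem_sub incoh_orbit.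
  rewrite /triple_rep; case: ifP => coh; apply: (@orbit_bfsP _ _ 6%N 18%N).
  - by apply: coh_orbit; rewrite mem_filter coh.
  - by apply: incoh_orbit; rewrite mem_filter /= coh.
rewrite rep_sort => -[w w6 e]; exists w => //.
by rewrite -(perm_sort leq l) e act_word_triple.
Qed.

Lemma triple_transitive l : index_triple l ->
  exists2 mu, M_L mu & tact (triple_of (triple_rep l)) mu = triple_of l.
Proof.
move=> l_ok; have [w w6 l_perm] := triple_reachable l_ok.
exists (mx_word ML_gens w); first exact: M_L_word.
rewrite tact_word //; last by rewrite /triple_rep; case: ifP.
by apply: triple_of_eq_mem; apply: perm_mem; rewrite perm_sym.
Qed.

Lemma triple_orbitP w S S' : central_nonid w -> is_triple S ->
  triple_orbit S S' <-> is_triple S' /\ (coherent w S' <-> coherent w S).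
Proof.
move=> cw tS; split.
  by case=> mu [ML_mu ->]; split; [apply: is_triple_tact | apply: coherent_tact_iff].
case=> tS' coh_iff; case/is_tripleP: tS => l l_ok eS; case/is_tripleP: tS' => l' l'_ok eS'.
subst S S'.
have coh_eq : coherentb l' = coherentb l.
  by apply/idP/idP=> [/(coherentP cw l'_ok)/coh_iff | /(coherentP cw l_ok)/coh_iff];
    move/coherentP; apply.
have [mu ML_mu e] := triple_transitive l_ok; have [mu' ML_mu' e'] := triple_transitive l'_ok.
have [nu ML_nu e_nu] := tact_inv (triple_of (triple_rep l)) ML_mu.
exists (nu *m mu'); split; first exact: gen_mul.
by rewrite -tact_mul -e e_nu -e' /triple_rep coh_eq.
Qed.

Lemma has_card_triples (P : (Defs.coset -> Prop) -> Prop) (Pb : pred (seq nat)) :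
  (forall l, index_triple l -> P (triple_of l) <-> Pb l) ->
  (forall l1 l2, l1 =i l2 -> Pb l1 = Pb l2) ->
  has_card (fun S => is_triple S /\ P S) (count Pb sorted_triples).
Proof.
move=> PP Pb_mem; case/and3P: sorted_triples_spec => uniq_st /allP st_ok _.
rewrite -size_filter; set L := filter Pb sorted_triples.
have L_ok l : l \in L -> [/\ Pb l, sorted ltn l & index_triple l].
  by rewrite mem_filter => /andP[Pl /st_ok /andP[]].
exists (fun i : 'I_(size L) => triple_of (nth [::] L i)); split.
  move=> i j e; apply/val_inj/eqP.
  rewrite -(nth_uniq [::] (ltn_ord i) (ltn_ord j) (filter_uniq Pb uniq_st)); apply/eqP.
  have [_ si /and3P[_ _ i12]] := L_ok _ (mem_nth [::] (ltn_ord i)).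
  have [_ sj /and3P[_ _ j12]] := L_ok _ (mem_nth [::] (ltn_ord j)).
  apply: (irr_sorted_eq ltn_trans ltnn si sj) => p.
  by apply/idP/idP; apply: triple_of_subset.
move=> S; split.
  case=> /is_tripleP[l l_ok ->] /(PP l l_ok) Pl.
  have sort_L : sort leq l \in L.
    by rewrite mem_filter (Pb_mem _ _ (mem_sort leq l)) Pl sort_index_triple.
  exists (Ordinal (etrans (index_mem _ _) sort_L)); rewrite /= nth_index //.
  by apply: triple_of_eq_mem => p; rewrite mem_sort.
case=> i ->; have [Pl _ l_ok] := L_ok _ (mem_nth [::] (ltn_ord i)).
by split; [apply/is_tripleP; exists (nth [::] L i) | apply/PP].
Qed.

Local Close Scope ring_scope.

Lemma count_coherent_triples :
  count coherentb sorted_triples = 160 /\ count (predC coherentb) sorted_triples = 60.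
Proof. by vm_compute. Qed.

Theorem proposition6p6 :
  (exists w0, central_nonid w0) /\
  forall w0, central_nonid w0 ->
    [/\ forall S, is_triple S -> coherent w0 S ->
          triple_orbit S = (fun S' => is_triple S' /\ coherent w0 S'),
        forall S, is_triple S -> ~ coherent w0 S ->
          triple_orbit S = (fun S' => is_triple S' /\ ~ coherent w0 S'),
        has_card (fun S => is_triple S /\ coherent w0 S) 160
      & has_card (fun S => is_triple S /\ ~ coherent w0 S) 60].
Proof.
split; first by exists w0; exact: central_nonid_w0.
move=> w cw; have [count_coh count_incoh] := count_coherent_triples; split.
- by move=> S tS cS; apply: predext => S'; rewrite (triple_orbitP _ cw tS); tauto.
- by move=> S tS cS; apply: predext => S'; rewrite (triple_orbitP _ cw tS); tauto.
- rewrite -count_coh; apply: has_card_triples coherentb_eq_mem => l.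
  exact: coherentP.
- rewrite -count_incoh; apply: has_card_triples => [l l_ok|l1 l2 e] /=.
    by rewrite (coherentP cw l_ok); split=> /negP.
  by rewrite (coherentb_eq_mem e).
Qed.
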